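(* Let $T>0$, $m_0\in\mathbb R$, let $l:[0,T]\to[0,\infty)$ be continuous and nondecreasing, and let $b:\mathbb R\times[0,\infty)\times[0,T]\to\mathbb R$ be continuous and $L_m$-Lipschitz in its first argument with $L_m\in(0,1)$. For $w\in C[0,T]$ let $M(w)_t=m_0\wedge\inf_{0\le r\le t}w_r$. Then for every $x\in C[0,T]$ the equation $$w_t=x_t-\sup_{s\le t}\big(x_s-b(M(w)_s,l_s,s)\big)^+,\qquad t\in[0,T],$$ has a unique solution $w=\Gamma(x)\in C[0,T]$, and for all $x,x'\in C[0,T]$, $$\|\Gamma(x)-\Gamma(x')\|_\infty\le\frac{2}{1-L_m}\|x-x'\|_\infty.$$
   Context: $C[0,T]$ denotes the space of real continuous functions on $[0,T]$ with the supremum norm $\|\cdot\|_\infty$; $(z)^+=\max(z,0)$. *)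

From Stdlib Require Import Reals.
From Coquelicot Require Import Coquelicot.
Open Scope R_scope.

(* Elements of C[0,T] are represented by functions R -> R; only their values on
   [0,T] matter. *)
Definition cont_on (T : R) (f : R -> R) : Prop :=
  forall t, 0 <= t <= T -> forall eps, 0 < eps -> exists delta, 0 < delta /\
    forall s, 0 <= s <= T -> Rabs (s - t) < delta -> Rabs (f s - f t) < eps.

(* supremum over s in [a,c] of g s (as a real; finite for continuous g) *)
Definition sup_on (a c : R) (g : R -> R) : R :=
  real (Lub_Rbar (fun y => exists s, a <= s <= c /\ y = g s)).

Definition inf_on (a c : R) (g : R -> R) : R :=
  real (Glb_Rbar (fun y => exists s, a <= s <= c /\ y = g s)).

Definition supnorm (T : R) (f : R -> R) : R := sup_on 0 T (fun t => Rabs (f t)).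

Definition pos_part (z : R) : R := Rmax z 0.

Definition runmin (m0 : R) (w : R -> R) (t : R) : R := Rmin m0 (inf_on 0 t w).

Definition solves (T m0 : R) (l : R -> R) (b : R -> R -> R -> R) (x w : R -> R) : Prop :=
  forall t, 0 <= t <= T ->
    w t = x t - sup_on 0 t (fun s => pos_part (x s - b (runmin m0 w s) (l s) s)).

Definition cont3_on (T : R) (b : R -> R -> R -> R) : Prop :=
  forall m u s, 0 <= u -> 0 <= s <= T -> forall eps, 0 < eps -> exists delta, 0 < delta /\
    forall m' u' s', 0 <= u' -> 0 <= s' <= T ->
      Rabs (m' - m) < delta -> Rabs (u' - u) < delta -> Rabs (s' - s) < delta ->
      Rabs (b m' u' s' - b m u s) < eps.

(* The right-hand side, viewed as a map [w |-> reflection x w], is a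
   contraction of constant [Lm] for the uniform norm on [0,T]: the running
   minimum, the running supremum and the positive part are all 1-Lipschitz,
   so only the Lipschitz constant of [b] survives.  Picard iteration from [x]
   then converges uniformly to the unique continuous solution.  Comparing the
   solutions for [x] and [x'] in the same way gives
   [|w - w'| <= 2 |x - x'| + Lm |w - w'|], whence the constant [2 / (1 - Lm)]. *)

From Stdlib Require Import Reals Lra Lia.
From Coquelicot Require Import Coquelicot.
Open Scope R_scope.

Lemma sup_on_spec a c g : a <= c -> (exists B, forall s, a <= s <= c -> g s <= B) ->
  (forall s, a <= s <= c -> g s <= sup_on a c g) /\
  (forall K, (forall s, a <= s <= c -> g s <= K) -> sup_on a c g <= K).
Proof.
  intros Hac [B HB]; unfold sup_on.
  set (E := fun y => exists s, a <= s <= c /\ y = g s).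
  destruct (Lub_Rbar_correct E) as [Hub Hlub].
  assert (Hga : Rbar_le (g a) (Lub_Rbar E)) by (apply Hub; exists a; split; [lra | reflexivity]).
  assert (HleB : Rbar_le (Lub_Rbar E) B) by (apply Hlub; intros y [s [Hs ->]]; simpl; apply HB, Hs).
  destruct (Lub_Rbar E) as [S| |]; simpl in Hga, HleB |- *; try contradiction.
  split.
  - intros s Hs; exact (Hub (g s) (ex_intro _ s (conj Hs eq_refl))).
  - intros K HK; apply (Hlub K); intros y [s [Hs ->]]; apply HK, Hs.
Qed.

Lemma inf_on_opp a c g : inf_on a c g = - sup_on a c (fun s => - g s).
Proof.
  unfold inf_on, sup_on; rewrite <- Rbar_opp_real; f_equal.
  apply is_glb_Rbar_unique.
  eapply is_glb_Rbar_eqset; [| apply is_glb_Rbar_opp, Lub_Rbar_correct].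
  intros y; split.
  - intros [s [Hs ->]]; exists s; split; [exact Hs | ring].
  - intros [s [Hs Hy]]; exists s; split; [exact Hs | lra].
Qed.

Lemma sup_on_lipschitz a c g g' K : a <= c ->
  (exists B, forall s, a <= s <= c -> g s <= B) ->
  (exists B, forall s, a <= s <= c -> g' s <= B) ->
  (forall s, a <= s <= c -> Rabs (g s - g' s) <= K) ->
  Rabs (sup_on a c g - sup_on a c g') <= K.
Proof.
  intros Hac Hb Hb' HK.
  destruct (sup_on_spec a c g Hac Hb) as [Hub Hlub].
  destruct (sup_on_spec a c g' Hac Hb') as [Hub' Hlub'].
  apply Rabs_le; split.
  - enough (sup_on a c g' <= sup_on a c g + K) by lra.
    apply Hlub'; intros s Hs.
    specialize (Hub s Hs); specialize (HK s Hs); apply Rabs_le_between in HK; lra.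
  - enough (sup_on a c g <= sup_on a c g' + K) by lra.
    apply Hlub; intros s Hs.
    specialize (Hub' s Hs); specialize (HK s Hs); apply Rabs_le_between in HK; lra.
Qed.

Lemma inf_on_lipschitz a c g g' K : a <= c ->
  (exists B, forall s, a <= s <= c -> B <= g s) ->
  (exists B, forall s, a <= s <= c -> B <= g' s) ->
  (forall s, a <= s <= c -> Rabs (g s - g' s) <= K) ->
  Rabs (inf_on a c g - inf_on a c g') <= K.
Proof.
  intros Hac [B HB] [B' HB'] HK.
  rewrite !inf_on_opp, <- Rabs_Ropp.
  replace (- (- sup_on a c (fun s => - g s) - - sup_on a c (fun s => - g' s)))
    with (sup_on a c (fun s => - g s) - sup_on a c (fun s => - g' s)) by ring.
  apply sup_on_lipschitz; [exact Hac | exists (- B) | exists (- B') |].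
  - intros s Hs; specialize (HB s Hs); lra.
  - intros s Hs; specialize (HB' s Hs); lra.
  - intros s Hs; rewrite <- Rabs_Ropp; replace (- (- g s - - g' s)) with (g s - g' s) by ring.
    apply HK, Hs.
Qed.

Definition nonexpansive (h : R -> R) := forall u v, Rabs (h u - h v) <= Rabs (u - v).

Ltac Rabs_cases := unfold Rabs; repeat destruct Rcase_abs; lra.

Lemma Ropp_nonexpansive : nonexpansive Ropp.
Proof. intros u v; Rabs_cases. Qed.

Lemma Rmin_nonexpansive a : nonexpansive (Rmin a).
Proof. intros u v; unfold Rmin; repeat destruct Rle_dec; Rabs_cases. Qed.

Lemma Rmax_nonexpansive a : nonexpansive (Rmax a).
Proof. intros u v; unfold Rmax; repeat destruct Rle_dec; Rabs_cases. Qed.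

Lemma pos_part_nonexpansive : nonexpansive pos_part.
Proof. intros u v; unfold pos_part; rewrite (Rmax_comm u), (Rmax_comm v); apply Rmax_nonexpansive. Qed.

Lemma cont_on_nonexpansive T f h : nonexpansive h -> cont_on T f -> cont_on T (fun t => h (f t)).
Proof.
  intros Hh Hf t Ht eps Heps; destruct (Hf t Ht eps Heps) as [d [Hd Hfd]].
  exists d; split; [exact Hd |]; intros s Hs Hst.
  eapply Rle_lt_trans; [apply Hh | apply Hfd; assumption].
Qed.

Lemma cont_on_minus T f g : cont_on T f -> cont_on T g -> cont_on T (fun t => f t - g t).
Proof.
  intros Hf Hg t Ht eps Heps.
  destruct (Hf t Ht (eps / 2)) as [d1 [Hd1 Hf1]]; [lra |].
  destruct (Hg t Ht (eps / 2)) as [d2 [Hd2 Hg2]]; [lra |].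
  exists (Rmin d1 d2); split; [apply Rmin_pos; assumption |]; intros s Hs Hst.
  specialize (Hf1 s Hs (Rlt_le_trans _ _ _ Hst (Rmin_l _ _))).
  specialize (Hg2 s Hs (Rlt_le_trans _ _ _ Hst (Rmin_r _ _))).
  revert Hf1 Hg2; Rabs_cases.
Qed.

(* [cont_on] only constrains [f] on [0,T]; composing with the retraction
   [clamp] gives a function continuous on all of R, to which Stdlib's
   extreme value theorem applies. *)
Lemma cont_on_bounded T f : 0 <= T -> cont_on T f ->
  exists B, forall t, 0 <= t <= T -> Rabs (f t) <= B.
Proof.
  intros HT Hf.
  set (clamp := fun t => Rmax 0 (Rmin T t)).
  assert (clamp_in : forall u, 0 <= clamp u <= T).
  { intros u; unfold clamp, Rmax, Rmin; repeat destruct Rle_dec; lra. }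
  assert (clamp_nonexpansive : nonexpansive clamp).
  { intros u v; eapply Rle_trans; [apply Rmax_nonexpansive | apply Rmin_nonexpansive]. }
  set (h := fun t => Rabs (f (clamp t))).
  assert (Hc : forall c, 0 <= c <= T -> continuity_pt h c).
  { intros c _ eps Heps.
    destruct (Hf (clamp c) (clamp_in c) eps Heps) as [d [Hd Hfd]].
    exists d; split; [exact Hd |]; intros u [_ Hu]; simpl in *; unfold R_dist in *.
    eapply Rle_lt_trans; [apply Rabs_triang_inv2 |].
    apply Hfd; [apply clamp_in | eapply Rle_lt_trans; [apply clamp_nonexpansive | exact Hu]]. }
  destruct (continuity_ab_maj h 0 T HT Hc) as [tM [HM _]].
  exists (h tM); intros t Ht; specialize (HM t Ht); unfold h in HM.
  replace (clamp t) with t in HM; [exact HM |].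
  unfold clamp, Rmax, Rmin; repeat destruct Rle_dec; lra.
Qed.

Lemma cont_on_bounded_above T f t : 0 <= T -> cont_on T f -> t <= T ->
  exists B, forall s, 0 <= s <= t -> f s <= B.
Proof.
  intros HT Hf Ht; destruct (cont_on_bounded T f HT Hf) as [B HB].
  exists B; intros s Hs; specialize (HB s ltac:(lra)); apply Rabs_le_between in HB; lra.
Qed.

Lemma cont_on_bounded_below T f t : 0 <= T -> cont_on T f -> t <= T ->
  exists B, forall s, 0 <= s <= t -> B <= f s.
Proof.
  intros HT Hf Ht; destruct (cont_on_bounded T f HT Hf) as [B HB].
  exists (- B); intros s Hs; specialize (HB s ltac:(lra)); apply Rabs_le_between in HB; lra.
Qed.

Lemma supnorm_spec T f : 0 <= T -> cont_on T f ->
  (forall t, 0 <= t <= T -> Rabs (f t) <= supnorm T f) /\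
  (forall K, (forall t, 0 <= t <= T -> Rabs (f t) <= K) -> supnorm T f <= K).
Proof.
  intros HT Hf; apply sup_on_spec; [exact HT |].
  destruct (cont_on_bounded T f HT Hf) as [B HB]; exists B; exact HB.
Qed.

Lemma sup_on_extend g t t' delta : 0 <= t <= t' -> 0 <= delta ->
  (exists B, forall s, 0 <= s <= t' -> g s <= B) ->
  (forall r, t <= r <= t' -> g r <= sup_on 0 t g + delta) ->
  sup_on 0 t g <= sup_on 0 t' g <= sup_on 0 t g + delta.
Proof.
  intros Ht Hdelta [B HB] Hnear.
  destruct (sup_on_spec 0 t g ltac:(lra)) as [Hub Hlub].
  { exists B; intros s Hs; apply HB; lra. }
  destruct (sup_on_spec 0 t' g ltac:(lra) (ex_intro _ B HB)) as [Hub' Hlub'].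
  split.
  - apply Hlub; intros s Hs; apply Hub'; lra.
  - apply Hlub'; intros s Hs; destruct (Rle_dec s t).
    + specialize (Hub s ltac:(lra)); lra.
    + apply Hnear; lra.
Qed.

Lemma cont_on_running_sup T g : 0 <= T -> cont_on T g -> cont_on T (fun t => sup_on 0 t g).
Proof.
  intros HT Hg t Ht eps Heps.
  assert (Hbnd : forall u, 0 <= u <= T -> exists B, forall s, 0 <= s <= u -> g s <= B).
  { intros u Hu; apply (cont_on_bounded_above T); [exact HT | exact Hg | lra]. }
  assert (Hsup : forall u, 0 <= u <= T -> g u <= sup_on 0 u g).
  { intros u Hu; apply sup_on_spec; [lra | apply Hbnd, Hu | lra]. }
  destruct (Hg t Ht (eps / 4)) as [d [Hd Hgd]]; [lra |].
  exists d; split; [exact Hd |]; intros t' Ht' Htt'.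
  assert (Hnear : forall r, Rmin t t' <= r <= Rmax t t' -> Rabs (g r - g t) < eps / 4).
  { intros r Hr; apply Hgd; revert Htt' Hr; unfold Rmin, Rmax; repeat destruct Rle_dec; Rabs_cases. }
  assert (Hgt' : Rabs (g t' - g t) < eps / 4) by (apply Hnear; split; [apply Rmin_r | apply Rmax_r]).
  destruct (Rle_dec t t') as [Hle | Hlt].
  - assert (sup_on 0 t g <= sup_on 0 t' g <= sup_on 0 t g + eps / 4); [| apply Rabs_def1; lra].
    apply sup_on_extend; [lra | lra | apply Hbnd; lra |]; intros r Hr.
    assert (Hgr : Rabs (g r - g t) < eps / 4)
      by (apply Hnear; rewrite Rmin_left, Rmax_right by lra; exact Hr).
    specialize (Hsup t Ht); revert Hgr; Rabs_cases.
  - assert (sup_on 0 t' g <= sup_on 0 t g <= sup_on 0 t' g + eps / 2); [| apply Rabs_def1; lra].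
    apply sup_on_extend; [lra | lra | apply Hbnd; lra |]; intros r Hr.
    assert (Hgr : Rabs (g r - g t) < eps / 4)
      by (apply Hnear; rewrite Rmin_right, Rmax_left by lra; exact Hr).
    specialize (Hsup t' Ht'); revert Hgr Hgt'; Rabs_cases.
Qed.

Lemma cont_on_runmin T m0 w : 0 <= T -> cont_on T w -> cont_on T (runmin m0 w).
Proof.
  intros HT Hw; unfold runmin.
  apply (cont_on_nonexpansive T (fun t => inf_on 0 t w) (Rmin m0) (Rmin_nonexpansive m0)).
  unfold cont_on; setoid_rewrite inf_on_opp.
  apply (cont_on_nonexpansive T _ Ropp Ropp_nonexpansive), cont_on_running_sup; [exact HT |].
  apply (cont_on_nonexpansive T w Ropp Ropp_nonexpansive), Hw.
Qed.

Lemma runmin_lipschitz m0 w w' t K : 0 <= t ->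
  (exists B, forall s, 0 <= s <= t -> B <= w s) ->
  (exists B, forall s, 0 <= s <= t -> B <= w' s) ->
  (forall s, 0 <= s <= t -> Rabs (w s - w' s) <= K) ->
  Rabs (runmin m0 w t - runmin m0 w' t) <= K.
Proof.
  intros Ht Hw Hw' HK; unfold runmin.
  eapply Rle_trans; [apply Rmin_nonexpansive | apply inf_on_lipschitz; assumption].
Qed.

Lemma cont_on_cont3_comp T b m l : cont3_on T b -> cont_on T m -> cont_on T l ->
  (forall t, 0 <= t <= T -> 0 <= l t) -> cont_on T (fun s => b (m s) (l s) s).
Proof.
  intros Hb Hm Hl Hl0 t Ht eps Heps.
  destruct (Hb (m t) (l t) t (Hl0 t Ht) Ht eps Heps) as [d [Hd Hbd]].
  destruct (Hm t Ht d Hd) as [dm [Hdm Hmd]].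
  destruct (Hl t Ht d Hd) as [dl [Hdl Hld]].
  exists (Rmin d (Rmin dm dl)); split; [repeat apply Rmin_pos; assumption |].
  intros s Hs Hst.
  assert (Rmin d (Rmin dm dl) <= d) by apply Rmin_l.
  assert (Rmin d (Rmin dm dl) <= dm) by (eapply Rle_trans; [apply Rmin_r | apply Rmin_l]).
  assert (Rmin d (Rmin dm dl) <= dl) by (eapply Rle_trans; [apply Rmin_r | apply Rmin_r]).
  apply Hbd; [apply Hl0, Hs | exact Hs | apply Hmd | apply Hld | ]; auto; lra.
Qed.

Lemma geometric_eventually_small L D : 0 <= L < 1 ->
  forall eps, 0 < eps -> exists N, forall n, (N <= n)%nat -> D * L ^ n < eps.
Proof.
  intros HL eps Heps.
  assert (Hlim : is_lim_seq (fun n => D * L ^ n) 0).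
  { replace (Finite 0) with (Rbar_mult D 0) by (simpl; f_equal; ring).
    apply is_lim_seq_scal_l, is_lim_seq_geom; rewrite Rabs_pos_eq; lra. }
  apply is_lim_seq_spec in Hlim; destruct (Hlim (mkposreal eps Heps)) as [N HN].
  exists N; intros n Hn; specialize (HN n Hn); simpl in HN.
  rewrite Rminus_0_r in HN; apply Rabs_lt_between in HN; lra.
Qed.

Lemma le_geometric_nonpos L D a : 0 <= L < 1 -> (forall n, a <= D * L ^ n) -> a <= 0.
Proof.
  intros HL Ha.
  assert (Hlim : is_lim_seq (fun n => D * L ^ n) 0).
  { replace (Finite 0) with (Rbar_mult D 0) by (simpl; f_equal; ring).
    apply is_lim_seq_scal_l, is_lim_seq_geom; rewrite Rabs_pos_eq; lra. }
  exact (is_lim_seq_le (fun _ => a) _ a 0 Ha (is_lim_seq_const a) Hlim).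
Qed.

Lemma Lim_seq_geometric_rate L D (u : nat -> R) : 0 <= L < 1 ->
  (forall n m, (n <= m)%nat -> Rabs (u m - u n) <= D * L ^ n) ->
  forall n, Rabs (real (Lim_seq u) - u n) <= D * L ^ n.
Proof.
  intros HL Hu n.
  assert (Hcauchy : ex_lim_seq_cauchy u).
  { intros [eps Heps]; simpl.
    destruct (geometric_eventually_small L D HL eps Heps) as [N HN].
    exists N; intros p q Hp Hq; destruct (Nat.le_ge_cases p q) as [Hpq | Hqp].
    - rewrite Rabs_minus_sym; eapply Rle_lt_trans; [apply Hu, Hpq | apply HN, Hp].
    - eapply Rle_lt_trans; [apply Hu, Hqp | apply HN, Hq]. }
  apply ex_lim_seq_cauchy_corr in Hcauchy; destruct Hcauchy as [lu Hlu].
  rewrite (is_lim_seq_unique _ _ Hlu); simpl.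
  assert (Htail : is_lim_seq (fun m => Rabs (u (m + n)%nat - u n)) (Rabs (lu - u n))).
  { apply (is_lim_seq_abs _ (lu - u n)), is_lim_seq_minus'; [| apply is_lim_seq_const].
    apply (is_lim_seq_incr_n u n lu), Hlu. }
  exact (is_lim_seq_le _ (fun _ => D * L ^ n) _ (D * L ^ n)
           (fun m => Hu n (m + n)%nat ltac:(lia)) Htail (is_lim_seq_const _)).
Qed.

Section UniformContraction.

Variables (T L : R) (F : (R -> R) -> R -> R) (u0 : R -> R).
Hypothesis HT : 0 <= T.
Hypothesis HL : 0 <= L < 1.
Hypothesis F_cont : forall u, cont_on T u -> cont_on T (F u).
Hypothesis F_contraction : forall u v K, cont_on T u -> cont_on T v ->
  (forall t, 0 <= t <= T -> Rabs (u t - v t) <= K) ->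
  forall t, 0 <= t <= T -> Rabs (F u t - F v t) <= L * K.
Hypothesis u0_cont : cont_on T u0.

Definition picard (n : nat) : R -> R := Nat.iter n F u0.

Lemma cont_on_picard n : cont_on T (picard n).
Proof. induction n as [| n IH]; [exact u0_cont | apply F_cont, IH]. Qed.

Lemma picard_step D : (forall t, 0 <= t <= T -> Rabs (picard 1 t - picard 0 t) <= D) ->
  forall n t, 0 <= t <= T -> Rabs (picard (S n) t - picard n t) <= L ^ n * D.
Proof.
  intros HD n; induction n as [| n IH]; intros t Ht.
  - rewrite pow_O, Rmult_1_l; apply HD, Ht.
  - rewrite <- tech_pow_Rmult, Rmult_assoc.
    exact (F_contraction (picard (S n)) (picard n) _ (cont_on_picard _) (cont_on_picard _) IH t Ht).
Qed.

Lemma picard_cauchy : exists D, forall n m t, (n <= m)%nat -> 0 <= t <= T ->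
  Rabs (picard m t - picard n t) <= D * L ^ n.
Proof.
  destruct (cont_on_bounded T _ HT (cont_on_minus T _ _ (cont_on_picard 1) (cont_on_picard 0)))
    as [D0 HD0].
  assert (HD0pos : 0 <= D0) by (eapply Rle_trans; [apply Rabs_pos | apply (HD0 0); lra]).
  assert (Htele : forall n k t, 0 <= t <= T ->
    Rabs (picard (n + k) t - picard n t) <= D0 * (L ^ n - L ^ (n + k)) / (1 - L)).
  { intros n k t Ht; induction k as [| k IH].
    - rewrite Nat.add_0_r, Rminus_diag, Rabs_R0; right; field; lra.
    - rewrite Nat.add_succ_r.
      assert (Hstep := picard_step D0 HD0 (n + k) t Ht).
      assert (Htri := Rabs_triang (picard (S (n + k)) t - picard (n + k) t)
                                  (picard (n + k) t - picard n t)).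
      replace (picard (S (n + k)) t - picard (n + k) t + (picard (n + k) t - picard n t))
        with (picard (S (n + k)) t - picard n t) in Htri by ring.
      replace (D0 * (L ^ n - L ^ S (n + k)) / (1 - L))
        with (L ^ (n + k) * D0 + D0 * (L ^ n - L ^ (n + k)) / (1 - L))
        by (simpl; field; lra).
      lra. }
  exists (D0 / (1 - L)); intros n m t Hnm Ht.
  replace m with (n + (m - n))%nat by lia.
  eapply Rle_trans; [apply Htele, Ht |].
  assert (0 <= L ^ (n + (m - n))) by (apply pow_le; lra).
  apply (Rmult_le_reg_r (1 - L)); [lra |].
  replace (D0 * (L ^ n - L ^ (n + (m - n))) / (1 - L) * (1 - L))
    with (D0 * (L ^ n - L ^ (n + (m - n)))) by (field; lra).
  replace (D0 / (1 - L) * L ^ n * (1 - L)) with (D0 * L ^ n) by (field; lra).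
  apply Rmult_le_compat_l; lra.
Qed.

Definition picard_limit (t : R) : R := real (Lim_seq (fun n => picard n t)).

Lemma picard_limit_rate : exists D, forall n t, 0 <= t <= T ->
  Rabs (picard_limit t - picard n t) <= D * L ^ n.
Proof.
  destruct picard_cauchy as [D HD]; exists D; intros n t Ht.
  apply (Lim_seq_geometric_rate L D (fun k => picard k t) HL); intros p q Hpq; apply HD; assumption.
Qed.

Lemma cont_on_picard_limit : cont_on T picard_limit.
Proof.
  destruct picard_limit_rate as [D HD]; intros t Ht eps Heps.
  destruct (geometric_eventually_small L D HL (eps / 3)) as [N HN]; [lra |].
  specialize (HN N (le_n N)).
  destruct (cont_on_picard N t Ht (eps / 3)) as [d [Hd HNd]]; [lra |].
  exists d; split; [exact Hd |]; intros s Hs Hst.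
  specialize (HNd s Hs Hst); assert (Hs' := HD N s Hs); assert (Ht' := HD N t Ht).
  revert HNd Hs' Ht'; Rabs_cases.
Qed.

Lemma picard_limit_fixed t : 0 <= t <= T -> F picard_limit t = picard_limit t.
Proof.
  intros Ht; destruct picard_limit_rate as [D HD].
  enough (Rabs (F picard_limit t - picard_limit t) <= 0) by (revert H; Rabs_cases).
  apply (le_geometric_nonpos L (2 * D * L) _ HL); intros n.
  assert (HF := F_contraction _ _ _ cont_on_picard_limit (cont_on_picard n) (HD n) t Ht).
  assert (Hnext := HD (S n) t Ht); rewrite <- tech_pow_Rmult in Hnext.
  change (F (picard n) t) with (picard (S n) t) in HF.
  replace (2 * D * L * L ^ n) with (L * (D * L ^ n) + D * (L * L ^ n)) by ring.
  revert HF Hnext; Rabs_cases.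
Qed.

Theorem uniform_contraction_fixpoint : exists w, cont_on T w /\ forall t, 0 <= t <= T -> F w t = w t.
Proof. exists picard_limit; split; [exact cont_on_picard_limit | exact picard_limit_fixed]. Qed.

End UniformContraction.

Definition reflection m0 l (b : R -> R -> R -> R) (x w : R -> R) (t : R) : R :=
  x t - sup_on 0 t (fun s => pos_part (x s - b (runmin m0 w s) (l s) s)).

Section Reflection.

Variables (T m0 Lm : R) (l : R -> R) (b : R -> R -> R -> R).
Hypothesis HT : 0 <= T.
Hypothesis Hl_cont : cont_on T l.
Hypothesis Hl_nonneg : forall t, 0 <= t <= T -> 0 <= l t.
Hypothesis Hb_cont : cont3_on T b.
Hypothesis HLm : 0 <= Lm < 1.
Hypothesis Hb_lip : forall m m' u s, 0 <= u -> 0 <= s <= T ->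
  Rabs (b m u s - b m' u s) <= Lm * Rabs (m - m').

Lemma cont_on_reflection_integrand x w : cont_on T x -> cont_on T w ->
  cont_on T (fun s => pos_part (x s - b (runmin m0 w s) (l s) s)).
Proof.
  intros Hx Hw; apply (cont_on_nonexpansive T _ pos_part pos_part_nonexpansive).
  apply cont_on_minus; [exact Hx |].
  apply cont_on_cont3_comp; [exact Hb_cont | apply cont_on_runmin; assumption | exact Hl_cont | exact Hl_nonneg].
Qed.

Lemma cont_on_reflection x w : cont_on T x -> cont_on T w -> cont_on T (reflection m0 l b x w).
Proof.
  intros Hx Hw; apply cont_on_minus; [exact Hx |].
  apply cont_on_running_sup; [exact HT | apply cont_on_reflection_integrand; assumption].
Qed.

(* [x] enters twice, directly and through the integrand; [w] only through
   the barrier [b], which is [Lm]-Lipschitz in the running minimum. *)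
Lemma reflection_lipschitz x x' w w' Kx Kw t :
  cont_on T x -> cont_on T x' -> cont_on T w -> cont_on T w' ->
  (forall r, 0 <= r <= T -> Rabs (x r - x' r) <= Kx) ->
  (forall r, 0 <= r <= T -> Rabs (w r - w' r) <= Kw) -> 0 <= t <= T ->
  Rabs (reflection m0 l b x w t - reflection m0 l b x' w' t) <= 2 * Kx + Lm * Kw.
Proof.
  intros Hx Hx' Hw Hw' HKx HKw Ht.
  assert (Hsup : Rabs (sup_on 0 t (fun s => pos_part (x s - b (runmin m0 w s) (l s) s))
                       - sup_on 0 t (fun s => pos_part (x' s - b (runmin m0 w' s) (l s) s)))
                 <= Kx + Lm * Kw).
  { apply sup_on_lipschitz; [lra | apply (cont_on_bounded_above T) .. |];
      [exact HT | apply cont_on_reflection_integrand; assumption | lra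
      | exact HT | apply cont_on_reflection_integrand; assumption | lra |].
    intros s Hs; eapply Rle_trans; [apply pos_part_nonexpansive |].
    assert (HM : Rabs (runmin m0 w s - runmin m0 w' s) <= Kw).
    { apply runmin_lipschitz; [lra | apply (cont_on_bounded_below T) .. |];
        [exact HT | exact Hw | lra | exact HT | exact Hw' | lra |].
      intros r Hr; apply HKw; lra. }
    assert (Hb := Hb_lip (runmin m0 w s) (runmin m0 w' s) (l s) s (Hl_nonneg s ltac:(lra)) ltac:(lra)).
    assert (HLmM : Lm * Rabs (runmin m0 w s - runmin m0 w' s) <= Lm * Kw) by (apply Rmult_le_compat_l; lra).
    specialize (HKx s ltac:(lra)).
    revert Hb HLmM HKx; set (B := b (runmin m0 w s) (l s) s); set (B' := b (runmin m0 w' s) (l s) s).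
    Rabs_cases. }
  specialize (HKx t Ht); unfold reflection; revert Hsup HKx.
  set (S := sup_on 0 t _); set (S' := sup_on 0 t _); Rabs_cases.
Qed.

Lemma solves_lipschitz x x' w w' :
  cont_on T x -> cont_on T x' ->
  cont_on T w -> solves T m0 l b x w -> cont_on T w' -> solves T m0 l b x' w' ->
  supnorm T (fun t => w t - w' t) <= 2 / (1 - Lm) * supnorm T (fun t => x t - x' t).
Proof.
  intros Hx Hx' Hw Sw Hw' Sw'.
  destruct (supnorm_spec T _ HT (cont_on_minus T _ _ Hw Hw')) as [Hw_ub Hw_lub].
  destruct (supnorm_spec T _ HT (cont_on_minus T _ _ Hx Hx')) as [Hx_ub _].
  set (K := supnorm T (fun t => w t - w' t)) in *.
  set (Kx := supnorm T (fun t => x t - x' t)) in *.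
  assert (HK : K <= 2 * Kx + Lm * K).
  { apply Hw_lub; intros t Ht; rewrite (Sw t Ht), (Sw' t Ht).
    apply reflection_lipschitz; assumption. }
  apply (Rmult_le_reg_r (1 - Lm)); [lra |].
  replace (2 / (1 - Lm) * Kx * (1 - Lm)) with (2 * Kx) by (field; lra); lra.
Qed.

Lemma solves_unique x : cont_on T x -> forall w1 w2,
  cont_on T w1 -> solves T m0 l b x w1 -> cont_on T w2 -> solves T m0 l b x w2 ->
  forall t, 0 <= t <= T -> w1 t = w2 t.
Proof.
  intros Hx w1 w2 Hw1 S1 Hw2 S2 t Ht.
  destruct (supnorm_spec T _ HT (cont_on_minus T _ _ Hw1 Hw2)) as [Hw_ub _].
  destruct (supnorm_spec T _ HT (cont_on_minus T _ _ Hx Hx)) as [_ Hx_lub].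
  assert (Hx0 : supnorm T (fun t => x t - x t) <= 0).
  { apply Hx_lub; intros r _; rewrite Rminus_diag, Rabs_R0; lra. }
  assert (Hstab := solves_lipschitz x x w1 w2 Hx Hx Hw1 S1 Hw2 S2).
  assert (0 < 2 / (1 - Lm)) by (apply Rdiv_lt_0_compat; lra).
  assert (Hw := Hw_ub t Ht); simpl in Hw.
  assert (2 / (1 - Lm) * supnorm T (fun t => x t - x t) <= 0).
  { rewrite <- (Rmult_0_r (2 / (1 - Lm))); apply Rmult_le_compat_l; lra. }
  revert Hw; Rabs_cases.
Qed.

Lemma solves_exists x : cont_on T x -> exists w, cont_on T w /\ solves T m0 l b x w.
Proof.
  intros Hx.
  destruct (uniform_contraction_fixpoint T Lm (reflection m0 l b x) x HT HLm) as [w [Hw Hfix]].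
  - intros u Hu; apply cont_on_reflection; assumption.
  - intros u v K Hu Hv HK t Ht.
    replace (Lm * K) with (2 * 0 + Lm * K) by ring.
    apply reflection_lipschitz; try assumption.
    intros r _; rewrite Rminus_diag, Rabs_R0; lra.
  - exact Hx.
  - exists w; split; [exact Hw |]; intros t Ht; symmetry; apply Hfix, Ht.
Qed.

End Reflection.

Theorem mainTheorem8 (T m0 Lm : R) (l : R -> R) (b : R -> R -> R -> R)
  (HT : 0 < T)
  (Hl_cont : cont_on T l)
  (Hl_nonneg : forall t, 0 <= t <= T -> 0 <= l t)
  (Hl_mono : forall s t, 0 <= s -> s <= t -> t <= T -> l s <= l t)
  (Hb_cont : cont3_on T b)
  (HLm : 0 < Lm < 1)
  (Hb_lip : forall m m' u s, 0 <= u -> 0 <= s <= T ->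
              Rabs (b m u s - b m' u s) <= Lm * Rabs (m - m')) :
  (forall x, cont_on T x ->
     (exists w, cont_on T w /\ solves T m0 l b x w) /\
     (forall w1 w2, cont_on T w1 -> solves T m0 l b x w1 ->
                    cont_on T w2 -> solves T m0 l b x w2 ->
                    forall t, 0 <= t <= T -> w1 t = w2 t)) /\
  (forall x x' w w', cont_on T x -> cont_on T x' ->
     cont_on T w -> solves T m0 l b x w ->
     cont_on T w' -> solves T m0 l b x' w' ->
     supnorm T (fun t => w t - w' t) <= 2 / (1 - Lm) * supnorm T (fun t => x t - x' t)).
Proof.
  assert (HT0 : 0 <= T) by lra.
  assert (HLm' : 0 <= Lm < 1) by lra.
  split; [intros x Hx; split |].
  - exact (solves_exists T m0 Lm l b HT0 Hl_cont Hl_nonneg Hb_cont HLm' Hb_lip x Hx).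
  - exact (solves_unique T m0 Lm l b HT0 Hl_cont Hl_nonneg Hb_cont HLm' Hb_lip x Hx).
  - exact (solves_lipschitz T m0 Lm l b HT0 Hl_cont Hl_nonneg Hb_cont HLm' Hb_lip).
Qed.
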